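(* For all integers $m,n,k$ with $n\ge1$, $0\le m\le n$ and $k\ge0$, $$\sum_{j=0}^{n-1}A_{n,n-1,j}\sum_{l\ge0}\mathcal P^+_{m+j}(k,l)=\mathcal P^+_{m+n-1}(k,0)+(xy)^{n-1}\sum_{l\ge0}\mathcal P_m(0,n-k+l).$$
   Context: Three-step paths consist of up-steps $(1,1)$, level steps $(1,0)$ and down-steps $(1,-1)$. Weights: $w((1,1))=1$, $w((1,0))=x+y$, $w((1,-1))=xy$, and the weight $w(P)$ of a path is the product of the weights of its steps. $\mathcal P_n(k,l)=\sum_P w(P)$ over all three-step paths from $(0,k)$ to $(n,l)$ (zero if no such path); $\mathcal P^+_n(k,l)$ is the same sum restricted to paths never running below the $x$-axis. The last row of the matrix $A(n)$ is: $A_{n,n-1,n-1}=\frac{xy-(n-1)(x+y)}{xy}$ and, for $0\le j\le n-2$, $$A_{n,n-1,j}=\frac{(-1)^{n+j}}{xy}\sum_{l=j}^{n}\left(\binom lj\binom{n+j-1-l}{j}x^{l-j}y^{n-1-l}+\binom lj\binom{n+j-l}{j}x^{l-j}y^{n-l}\right),$$ with binomial coefficients $\binom ab$ equal to $0$ if $b<0$ or $a<b$. *)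

From HB Require Import structures.
From mathcomp Require Import all_boot all_order all_algebra.
Set Implicit Arguments. Unset Strict Implicit. Unset Printing Implicit Defensive.
Import Order.TTheory GRing.Theory Num.Theory.
Local Open Scope ring_scope.

(* A three-step path of length n is a sequence of n steps; a step s : 'I_3
   encodes the step (1, s-1): 0 = down-step, 1 = level step, 2 = up-step. *)
Definition step_h (s : 'I_3) : int := (nat_of_ord s)%:Z - 1.

Definition step_w (R : comRingType) (x y : R) (s : 'I_3) : R :=
  match nat_of_ord s with
  | 0%N => x * y
  | 1%N => x + y
  | _ => 1
  end.

Definition path_w (R : comRingType) (x y : R) (n : nat) (p : n.-tuple 'I_3) : R :=
  \prod_(s <- p) step_w x y s.

Definition end_h (k : int) (p : seq 'I_3) : int := k + \sum_(s <- p) step_h s.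

Definition nonneg_path (n : nat) (k : int) (p : n.-tuple 'I_3) : bool :=
  [forall i : 'I_n.+1, 0 <= end_h k (take i p)].

Definition Pn (R : comRingType) (x y : R) (n : nat) (k l : int) : R :=
  \sum_(p : n.-tuple 'I_3 | end_h k p == l) path_w x y p.

Definition Pplus (R : comRingType) (x y : R) (n : nat) (k l : int) : R :=
  \sum_(p : n.-tuple 'I_3 | (end_h k p == l) && nonneg_path k p) path_w x y p.

(* binomial coefficient with integer top, 0 when the top is negative
   (and, as 'C, 0 when top < bottom) *)
Definition binz (a : int) (b : nat) : nat :=
  match a with Posz a' => 'C(a', b) | Negz _ => 0%N end.

(* Last row of A(n): A_{n,n-1,j} *)
Definition A_last (R : fieldType) (x y : R) (n j : nat) : R :=
  if j == n.-1 then (x * y - (n.-1)%:R * (x + y)) / (x * y)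
  else (-1) ^+ (n + j) / (x * y) *
       \sum_(j <= l < n.+1)
         ((binz l j * binz (n%:Z + j%:Z - 1 - l%:Z) j)%:R
            * x ^+ (l - j) * y ^ (n%:Z - 1 - l%:Z)
          + (binz l j * binz (n%:Z + j%:Z - l%:Z) j)%:R
            * x ^+ (l - j) * y ^ (n%:Z - l%:Z)).

From HB Require Import structures.
From mathcomp Require Import all_boot all_order all_algebra.
From mathcomp Require Import zify ring.
Import Order.TTheory GRing.Theory Num.Theory.
Local Open Scope ring_scope.
Set Implicit Arguments. Unset Strict Implicit. Unset Printing Implicit Defensive.

(* Let T be the transfer operator of nonnegative paths, so that
   sum_l P^+_j(k,l) = (T^j 1)(k) and P^+_N(k,0) = (T^N delta_0)(k).  The
   binomial sums Q_{j,N} in A_{n,n-1,j} are the coefficients of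
   t^j ((1-xt)(1-yt))^-(j+1), hence satisfy the recurrence of the paths; this
   yields the inversion formula sum_j (-1)^j Q_{j,N} T^j 1 = (-1)^N gamma_N
   with gamma_N(k) = sum_{b <= min(N,k)} (xy)^b, and from it
   sum_j A_{n,n-1,j} T^j 1 = T^(n-1) delta_0 + (xy)^(n-1) [. >= n].
   Applying T^m, and noting that for m <= n the path count from [. >= n]
   never feels the axis, gives both terms of the right-hand side. *)

Lemma sum_tupleS (V : nmodType) (T : finType) N (F : N.+1.-tuple T -> V) :
  \sum_(p : N.+1.-tuple T) F p = \sum_(s : T) \sum_(t : N.-tuple T) F [tuple of s :: t].
Proof.
rewrite pair_big /=.
rewrite (reindex (fun p : T * N.-tuple T => [tuple of p.1 :: p.2])) //=.
exists (fun t : N.+1.-tuple T => (thead t, [tuple of behead t])).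
  by move=> [s t] _ /=; congr pair; apply: val_inj.
by move=> [[|s t] //= ?] _; apply: val_inj.
Qed.

Lemma sum_tuple0 (V : nmodType) (T : finType) (F : 0.-tuple T -> V) :
  \sum_(p : 0.-tuple T) F p = F [tuple].
Proof. by rewrite (big_pred1 [tuple]) // => t; apply/esym/eqP; apply: val_inj; case: t => [[]]. Qed.

Lemma end_h_cons k s (t : seq 'I_3) : end_h k (s :: t) = end_h (k + step_h s) t.
Proof. by rewrite /end_h big_cons addrA. Qed.

Lemma nonneg_path_cons N k s (t : N.-tuple 'I_3) :
  nonneg_path k [tuple of s :: t] = (0 <= k) && nonneg_path (k + step_h s) t.
Proof.
apply/forallP/andP => [H | [hk ht] [[|i] hi]].
- split; first by have := H ord0; rewrite /end_h big_nil addr0.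
  by apply/forallP => i; have := H (lift ord0 i); rewrite /= end_h_cons.
- by rewrite /end_h big_nil addr0.
- by have := forallP ht (Ordinal (hi : (i < N.+1)%N)); rewrite /= end_h_cons.
Qed.

Lemma nonneg_path0 k (t : 0.-tuple 'I_3) : nonneg_path k t = (0 <= k).
Proof.
by apply/forallP/idP => [/(_ ord0)|hk i]; rewrite (tuple0 t) /= /end_h big_nil addr0.
Qed.

Section PathCounts.
Variables (R : comRingType) (x y : R).

Lemma path_w_cons N s (t : N.-tuple 'I_3) :
  path_w x y [tuple of s :: t] = step_w x y s * path_w x y t.
Proof. by rewrite /path_w big_cons. Qed.

Lemma PplusS N k l : Pplus x y N.+1 k l =
  if 0 <= k then Pplus x y N (k + 1) l + (x + y) * Pplus x y N k l
                 + x * y * Pplus x y N (k - 1) l else 0.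
Proof.
have step s : \sum_(t : N.-tuple 'I_3)
     (if (end_h k [tuple of s :: t] == l) && nonneg_path k [tuple of s :: t]
      then path_w x y [tuple of s :: t] else 0)
  = if 0 <= k then step_w x y s * Pplus x y N (k + step_h s) l else 0.
  case: ifP => hk; last first.
    by rewrite big1 // => t _; rewrite nonneg_path_cons hk andbF.
  rewrite /Pplus mulr_sumr [RHS]big_mkcond; apply: eq_bigr => t _.
  rewrite nonneg_path_cons hk /= end_h_cons path_w_cons.
  by case: ifP; rewrite ?mulr0.
rewrite {1}/Pplus big_mkcond sum_tupleS !big_ord_recl big_ord0 !step.
case: ifP => _; last by rewrite !add0r.
rewrite /step_w /step_h /= mul1r.
have -> : k + ((bump 0 0)%:Z - 1) = k by rewrite /bump /= addr0.
have -> : k + (2%:Z - 1) = k + 1 by [].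
rewrite addr0; ring.
Qed.

Lemma Pplus0 k l : Pplus x y 0 k l = if (k == l) && (0 <= k) then 1 else 0.
Proof.
by rewrite /Pplus big_mkcond sum_tuple0 nonneg_path0 /end_h /path_w !big_nil addr0.
Qed.

Lemma Pplus_lt0 N k l : k < 0 -> Pplus x y N k l = 0.
Proof.
move=> hk; case: N => [|N]; last by rewrite PplusS leNgt hk.
by rewrite Pplus0 leNgt hk andbF.
Qed.

Lemma PnS N k l : Pn x y N.+1 k l =
  Pn x y N (k + 1) l + (x + y) * Pn x y N k l + x * y * Pn x y N (k - 1) l.
Proof.
have step s : \sum_(t : N.-tuple 'I_3)
     (if end_h k [tuple of s :: t] == l then path_w x y [tuple of s :: t] else 0)
  = step_w x y s * Pn x y N (k + step_h s) l.
  rewrite /Pn mulr_sumr [RHS]big_mkcond; apply: eq_bigr => t _.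
  by rewrite /= end_h_cons path_w_cons; case: ifP; rewrite ?mulr0.
rewrite {1}/Pn big_mkcond sum_tupleS !big_ord_recl big_ord0 !step.
rewrite /step_w /step_h /= mul1r.
have -> : k + ((bump 0 0)%:Z - 1) = k by rewrite /bump /= addr0.
have -> : k + (2%:Z - 1) = k + 1 by [].
rewrite addr0; ring.
Qed.

Lemma Pn0 k l : Pn x y 0 k l = if k == l then 1 else 0.
Proof. by rewrite /Pn big_mkcond sum_tuple0 /end_h /path_w !big_nil addr0. Qed.

Lemma Pn_shift N k l : Pn x y N k l = Pn x y N 0 (l - k).
Proof.
rewrite /Pn; apply: eq_bigl => p; rewrite /end_h add0r.
by apply/eqP/eqP => [<-|->]; ring.
Qed.

End PathCounts.

Section LinearOperator.
Variables (R : comRingType) (I : Type) (T : (I -> R) -> I -> R).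
Hypothesis T_ext : forall f g, f =1 g -> forall i, T f i = T g i.
Hypothesis T_lin : forall a b f g i,
  T (fun j => a * f j + b * g j) i = a * T f i + b * T g i.

Lemma linopZ a f i : T (fun j => a * f j) i = a * T f i.
Proof.
rewrite (T_ext (g := fun j => a * f j + 0 * f j)) => [|j]; last by rewrite mul0r addr0.
by rewrite T_lin mul0r addr0.
Qed.

Lemma linop_sum n (c : nat -> R) (F : nat -> I -> R) i :
  T (fun j => \sum_(p < n) c p * F p j) i = \sum_(p < n) c p * T (F p) i.
Proof.
elim: n i => [|n IH] i.
  rewrite big_ord0 (T_ext (g := fun j => 0 * F 0%N j)) => [|j]; last by rewrite big_ord0 mul0r.
  by rewrite linopZ mul0r.
rewrite (T_ext (g := fun j => 1 * \sum_(p < n) c p * F p j + c n * F n j)) => [|j].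
  by rewrite T_lin mul1r IH big_ord_recr.
by rewrite big_ord_recr mul1r.
Qed.

Lemma iter_linop_ext m f g : f =1 g -> forall i, iter m T f i = iter m T g i.
Proof. by move=> fg; elim: m => [|m IH] //= i; apply: T_ext. Qed.

Lemma iter_linop_lin m a b f g i :
  iter m T (fun j => a * f j + b * g j) i = a * iter m T f i + b * iter m T g i.
Proof.
elim: m i => [//|m IH] i.
by rewrite !iterS -T_lin; apply: T_ext.
Qed.

Lemma iter_linop_sum m n (c : nat -> R) (F : nat -> I -> R) i :
  iter m T (fun j => \sum_(p < n) c p * F p j) i = \sum_(p < n) c p * iter m T (F p) i.
Proof.
elim: m i => [//|m IH] i.
by rewrite iterS -(linop_sum _ _ (fun p => iter m T (F p))); apply: T_ext.
Qed.

End LinearOperator.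

Section Transfer.
Variables (R : comRingType) (x y : R).

Definition Tplus (f : int -> R) (k : int) : R :=
  if 0 <= k then f (k + 1) + (x + y) * f k + (if 1 <= k then x * y * f (k - 1) else 0)
  else 0.

Definition Tall (f : int -> R) (k : int) : R :=
  f (k + 1) + (x + y) * f k + x * y * f (k - 1).

Definition ind_ge (n : nat) (k : int) : R := if n%:Z <= k then 1 else 0.

Definition delta0 (k : int) : R := if k == 0 then 1 else 0.

Lemma Tplus_ext f g : f =1 g -> forall k, Tplus f k = Tplus g k.
Proof. by move=> fg k; rewrite /Tplus !fg. Qed.

Lemma Tplus_lin a b f g k :
  Tplus (fun j => a * f j + b * g j) k = a * Tplus f k + b * Tplus g k.
Proof. by rewrite /Tplus; case: ifP => _; [case: ifP => _; ring | ring]. Qed.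

Lemma Pplus_iter_delta0 N k : Pplus x y N k 0 = iter N Tplus delta0 k.
Proof.
elim: N k => [|N IH] k.
  by rewrite Pplus0 /= /delta0; case: eqP => [->|].
rewrite PplusS iterS /Tplus -!IH; case: ifP => // hk.
case: ifP => // /negbT hk1.
by rewrite (@Pplus_lt0 _ x y N (k - 1)) ?mulr0 //; lia.
Qed.

Lemma sum_Pplus N k (L : nat) : k + N%:Z <= L%:Z ->
  \sum_(0 <= l < L.+1) Pplus x y N k l%:Z = iter N Tplus (ind_ge 0) k.
Proof.
elim: N k => [|N IH] k hL.
  rewrite /= /ind_ge big_mkord; under eq_bigr => l _ do rewrite Pplus0.
  case: (lerP 0 k) => hk; last by rewrite big1 // => l _; rewrite andbF.
  have hkL : (absz k < L.+1)%N by lia.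
  rewrite (bigD1 (Ordinal hkL)) //= gez0_abs // eqxx big1 ?addr0 // => l hl.
  by rewrite andbT ifF //; apply: contraNF hl => /eqP/= kl; apply/eqP/val_inj => /=; lia.
rewrite iterS /Tplus; under eq_bigr => l _ do rewrite PplusS.
case: ifP => hk; last by rewrite big1.
rewrite !big_split /= -!mulr_sumr (IH (k + 1)) ?(IH k); try lia.
case: ifP => hk1; first by rewrite IH //; lia.
by rewrite big1 ?mulr0 ?addr0 // => l _; rewrite Pplus_lt0 //; lia.
Qed.

Lemma sum_Pn N (n : nat) k (L : nat) : N%:Z + k - n%:Z <= L%:Z ->
  \sum_(0 <= l < L.+1) Pn x y N 0 (n%:Z - k + l%:Z) = iter N Tall (ind_ge n) k.
Proof.
elim: N k => [|N IH] k hL.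
  rewrite /= /ind_ge big_mkord; under eq_bigr => l _ do rewrite Pn0.
  case: (lerP n%:Z k) => hk; last by rewrite big1 // => l _; case: eqP => //; lia.
  have hkL : (absz (k - n%:Z) < L.+1)%N by lia.
  rewrite (bigD1 (Ordinal hkL)) //= ifT; last by apply/eqP; lia.
  rewrite big1 ?addr0 // => l hl.
  by rewrite ifF //; apply: contraNF hl => /eqP/= kl; apply/eqP/val_inj => /=; lia.
have shiftE d l : Pn x y N (0 + d) (n%:Z - k + l) = Pn x y N 0 (n%:Z - (k + d) + l).
  by rewrite Pn_shift; congr Pn; ring.
under eq_bigr => l _ do rewrite PnS -(add0r 1) -(add0r (-1)) !shiftE add0r.
by rewrite !big_split /= -!mulr_sumr !IH ?iterS //; lia.
Qed.

Lemma iter_Tall_ind_ge_lt i (n : nat) k :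
  k < n%:Z - i%:Z -> iter i Tall (ind_ge n) k = 0.
Proof.
elim: i k => [|i IH] k hk; first by rewrite /= /ind_ge ifF //; lia.
by rewrite iterS /Tall !IH ?mulr0 ?addr0 //; lia.
Qed.

Lemma iter_Tplus_ind_ge i (n : nat) k : (i <= n)%N -> 0 <= k ->
  iter i Tplus (ind_ge n) k = iter i Tall (ind_ge n) k.
Proof.
elim: i k => [//|i IH] k hi hk.
rewrite !iterS /Tplus /Tall hk (IH (k + 1)) ?(IH k) //; try lia.
case: ifP => hk1; first by rewrite IH //; lia.
by rewrite (@iter_Tall_ind_ge_lt i n (k - 1)) ?mulr0 //; lia.
Qed.

End Transfer.

Section NegbinConv.
Variable R : comRingType.
Implicit Types x y : R.

(* The coefficient of t^M in (1 - x t)^-(j1+1) (1 - y t)^-(j2+1). *)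
Definition negbin_conv x y j1 j2 M : R :=
  \sum_(a < M.+1) ('C(a + j1, j1) * 'C(M - a + j2, j2))%:R * x ^+ a * y ^+ (M - a).

Lemma negbin_conv0 x y j1 j2 : negbin_conv x y j1 j2 0 = 1.
Proof. by rewrite /negbin_conv big_ord_recl big_ord0 /= !binn addr0 !mulr1. Qed.

Lemma negbin_conv1 x y j : negbin_conv x y j j 1 = j.+1%:R * (x + y).
Proof.
rewrite /negbin_conv !big_ord_recl big_ord0 /= /bump /= !add0n !add1n binn binSn.
by rewrite addr0 !muln1 mul1n; ring.
Qed.

Lemma negbin_conv_sym x y j1 j2 M : negbin_conv x y j1 j2 M = negbin_conv y x j2 j1 M.
Proof.
rewrite /negbin_conv (reindex_inj rev_ord_inj); apply: eq_bigr => a _ /=.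
rewrite subSS subKn; last by rewrite -ltnS.
by rewrite mulnC; ring.
Qed.

Lemma negbin_convSl x y j1 j2 M :
  negbin_conv x y j1.+1 j2 M.+1 = negbin_conv x y j1 j2 M.+1 + x * negbin_conv x y j1.+1 j2 M.
Proof.
rewrite /negbin_conv big_ord_recl [in RHS]big_ord_recl /= !binn -addrA; congr (_ + _).
rewrite mulr_sumr -big_split; apply: eq_bigr => a _ /=.
rewrite /bump /= !add1n subSS.
have -> : 'C(a.+1 + j1.+1, j1.+1) = ('C(a + j1.+1, j1.+1) + 'C(a.+1 + j1, j1))%N.
  by rewrite addSn binS addnS addSn.
by rewrite mulnDl natrD !natrM exprS; ring.
Qed.

Lemma negbin_convSr x y j1 j2 M :
  negbin_conv x y j1 j2.+1 M.+1 = negbin_conv x y j1 j2 M.+1 + y * negbin_conv x y j1 j2.+1 M.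
Proof. by rewrite !(negbin_conv_sym x y) negbin_convSl. Qed.

Lemma negbin_conv0lS x y j2 M :
  negbin_conv x y 0 j2 M.+1 = 'C(M.+1 + j2, j2)%:R * y ^+ M.+1 + x * negbin_conv x y 0 j2 M.
Proof.
rewrite /negbin_conv big_ord_recl /= bin0 mul1n mulr1; congr (_ + _).
rewrite mulr_sumr; apply: eq_bigr => a _ /=.
by rewrite /bump /= !add1n subSS !bin0 !mul1n exprS; ring.
Qed.

End NegbinConv.

Section Inversion.
Variables (R : comRingType) (x y : R).

(* The coefficient of t^N in t^j ((1 - x t)(1 - y t))^-(j+1); multiplying
   the generating series by (1 - x t)(1 - y t) gives Qdiag_rec. *)
Definition Qdiag j N : R := if (j <= N)%N then negbin_conv x y j j (N - j) else 0.

Lemma Qdiag_gt j N : (N < j)%N -> Qdiag j N = 0.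
Proof. by rewrite /Qdiag ltnNge => /negbTE ->. Qed.

Lemma sum_Qdiag_trunc (c F : nat -> R) n N : (N < n)%N ->
  \sum_(j < n) c j * Qdiag j N * F j = \sum_(j < N.+1) c j * Qdiag j N * F j.
Proof.
move=> ltNn; rewrite [RHS](big_ord_widen _ (fun j => c j * Qdiag j N * F j) ltNn) [RHS]big_mkcond.
by apply: eq_bigr => j _; case: ltnP => // /Qdiag_gt ->; rewrite mulr0 mul0r.
Qed.

Lemma Qdiag_id j : Qdiag j j = 1.
Proof. by rewrite /Qdiag leqnn subnn negbin_conv0. Qed.

Lemma Qdiag_rec j N : Qdiag j N.+2 =
  (if j is j'.+1 then Qdiag j' N.+1 else 0) + (x + y) * Qdiag j N.+1 - x * y * Qdiag j N.
Proof.
case: j => [|j].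
  rewrite /Qdiag /= !subn0 add0r (negbin_conv0lS x y 0 N.+1) (negbin_conv0lS x y 0 N).
  by rewrite !bin0 exprS; ring.
case: (ltngtP j N) => [ltjN | ltNj | ->].
- rewrite /Qdiag !ifT; try lia.
  have -> : (N.+2 - j.+1 = (N - j.+1).+2)%N by lia.
  have -> : (N.+1 - j.+1 = (N - j.+1).+1)%N by lia.
  have -> : (N.+1 - j = (N - j.+1).+2)%N by lia.
  set M := (N - j.+1)%N.
  rewrite (negbin_convSl x y j j.+1 M.+1) negbin_convSr (negbin_convSl x y j j.+1 M); ring.
- rewrite (@Qdiag_gt j.+1 N.+1 ltNj) (@Qdiag_gt j.+1 N (ltnW ltNj)) !mulr0 !subr0 addr0.
  have [->|ltNj'] := eqVneq j N.+1; first by rewrite !Qdiag_id.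
  by rewrite !Qdiag_gt //; lia.
- rewrite (@Qdiag_gt N.+1 N) // Qdiag_id /Qdiag !ifT //.
  by rewrite subSS subSnn !negbin_conv1 -[N.+2%:R]natr1; ring.
Qed.

Definition geom j : R := \sum_(b < j.+1) (x * y) ^+ b.

Lemma geom0 : geom 0 = 1.
Proof. by rewrite /geom big_ord_recl big_ord0 addr0. Qed.

Lemma mul_geom j : x * y * geom j = geom j.+1 - 1.
Proof.
rewrite /geom [in RHS]big_ord_recl mulr_sumr addrC addKr.
by apply: eq_bigr => b _; rewrite exprS.
Qed.

Definition gamma N (k : int) : R := if 0 <= k then geom (minn N (absz k)) else 0.

Lemma gamma_rec N k :
  gamma N.+2 k = Tplus x y (gamma N.+1) k - (x + y) * gamma N.+1 k - x * y * gamma N k.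
Proof.
rewrite /Tplus /gamma; case: k => [k|k]; last by rewrite /=; ring.
have -> : k%:Z + 1 = k.+1 by lia.
rewrite !le0z_nat /=; case: k => [|k].
  by rewrite /= minnSS !minn0 mul_geom geom0; ring.
have -> : k.+1%:Z - 1 = k by lia.
rewrite le0z_nat /= !minnSS (mul_geom (minn N.+1 k)) (mul_geom (minn N k.+1)); ring.
Qed.

Lemma gammaS n k : gamma n.+1 k = gamma n k + (x * y) ^+ n.+1 * ind_ge R n.+1 k.
Proof.
rewrite /gamma /ind_ge; case: k => [k|k]; last by rewrite /= mulr0 addr0.
rewrite lez_nat /=; case: (leqP n.+1 k) => h.
  by rewrite (minn_idPl (ltnW h)) /geom big_ord_recr mulr1.
by rewrite (minn_idPr (h : (k <= n)%N)) mulr0 addr0.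
Qed.

Definition Splus j : int -> R := iter j (Tplus x y) (ind_ge R 0).

Lemma alt_Qdiag_Splus N k :
  \sum_(j < N.+1) (-1) ^+ j * Qdiag j N * Splus j k = (-1) ^+ N * gamma N k.
Proof.
elim/ltn_ind: N k => -[|[|N]] IH k.
- by rewrite big_ord1 Qdiag_id /Splus /= /gamma /ind_ge min0n geom0; case: ifP => _; ring.
- rewrite !big_ord_recl big_ord0 addr0 /= Qdiag_id /Qdiag /= negbin_conv1 /Splus /=.
  rewrite /gamma /Tplus /ind_ge; case: k => [[|k]|k] /=; rewrite ?geom0; try ring.
  by rewrite minnSS min0n /geom big_ord_recr big_ord1 /bump /=; ring.
have distr j (A B C S : R) : (-1) ^+ j * (A + (x + y) * B - x * y * C) * S =
    (-1) ^+ j * A * S + (x + y) * ((-1) ^+ j * B * S) - x * y * ((-1) ^+ j * C * S).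
  by ring.
under eq_bigr => j _ do rewrite Qdiag_rec distr.
rewrite sumrB big_split /= -!mulr_sumr.
have shifted : \sum_(j < N.+3)
      (-1) ^+ j * (if nat_of_ord j is j'.+1 then Qdiag j' N.+1 else 0) * Splus j k
    = - Tplus x y (fun k => \sum_(j < N.+2) ((-1) ^+ j * Qdiag j N.+1) * Splus j k) k.
  rewrite big_ord_recl mulr0 mul0r add0r.
  rewrite (linop_sum (Tplus_ext x y) (Tplus_lin x y) _ (fun j => (-1) ^+ j * Qdiag j N.+1) Splus).
  by rewrite -sumrN; apply: eq_bigr => j _; rewrite exprS /Splus /=; ring.
rewrite shifted (Tplus_ext x y (g := fun k => (-1) ^+ N.+1 * gamma N.+1 k)) => [|k'].
  rewrite (linopZ (Tplus_ext x y) (Tplus_lin x y)) gamma_rec.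
  have [lt1 lt0] : (N.+1 < N.+3)%N /\ (N < N.+3)%N by lia.
  rewrite (sum_Qdiag_trunc (fun j => (-1) ^+ j) (Splus ^~ k) lt1).
  rewrite (sum_Qdiag_trunc (fun j => (-1) ^+ j) (Splus ^~ k) lt0).
  rewrite (IH N.+1) // (IH N) //.
  by rewrite !exprS; ring.
by rewrite (IH N.+1).
Qed.

Lemma Tplus_ind_ge0 k :
  Tplus x y (ind_ge R 0) k = (1 + (x + y) + x * y) * ind_ge R 0 k + (- (x * y)) * delta0 R k.
Proof.
by rewrite /Tplus /ind_ge /delta0; case: k => [[|k]|k] /=; ring.
Qed.

Lemma SplusSr n k : Splus n.+1 k =
  (1 + (x + y) + x * y) * Splus n k - x * y * iter n (Tplus x y) (delta0 R) k.
Proof.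
rewrite /Splus iterSr (iter_linop_ext (Tplus_ext x y) _ Tplus_ind_ge0).
by rewrite (iter_linop_lin (Tplus_ext x y) (Tplus_lin x y)); ring.
Qed.

End Inversion.

Section LastRow.
Variables (R : fieldType) (x y : R).

Lemma sum_binz_Qdiag n j : (j <= n)%N ->
  \sum_(j <= l < n.+1) (binz l j * binz (n%:Z + j%:Z - l%:Z) j)%:R
     * x ^+ (l - j) * y ^ (n%:Z - l%:Z) = Qdiag x y j n.
Proof.
move=> le_jn; rewrite /Qdiag le_jn -{1}(add0n j) big_addn big_mkord.
have -> : (n.+1 - j = (n - j).+1)%N by lia.
apply: eq_bigr => i _; have le_in : (i <= n - j)%N by rewrite -ltnS.
have -> : n%:Z + j%:Z - (i + j)%N%:Z = (n - i)%N%:Z by lia.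
have -> : n%:Z - (i + j)%N%:Z = (n - j - i)%N%:Z by lia.
have -> : (n - j - i + j = n - i)%N by lia.
by rewrite /= -exprnP addnK addnC.
Qed.

Lemma sum_binz_Qdiag_pred n j : (j <= n)%N ->
  \sum_(j <= l < n.+2) (binz l j * binz (n.+1%:Z + j%:Z - 1 - l%:Z) j)%:R
     * x ^+ (l - j) * y ^ (n.+1%:Z - 1 - l%:Z) = Qdiag x y j n.
Proof.
move=> le_jn; rewrite big_nat_recr /=; last by lia.
have -> : binz (n.+1%:Z + j%:Z - 1 - n.+1%:Z) j = 0%N.
  case: j le_jn => [|j] _; first by have -> : n.+1%:Z + 0%:Z - 1 - n.+1%:Z = -1 by lia.
  have -> : n.+1%:Z + j.+1%:Z - 1 - n.+1%:Z = j by lia.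
  by rewrite /= bin_small.
rewrite muln0 !mul0r addr0 -(sum_binz_Qdiag le_jn); apply: eq_bigr => l _.
have -> : n.+1%:Z + j%:Z - 1 - l%:Z = n%:Z + j%:Z - l%:Z by lia.
by have -> : n.+1%:Z - 1 - l%:Z = n%:Z - l%:Z by lia.
Qed.

Lemma A_last_Qdiag n j : (j < n)%N ->
  A_last x y n.+1 j = (-1) ^+ (n.+1 + j) / (x * y) * (Qdiag x y j n + Qdiag x y j n.+1).
Proof.
move=> lt_jn; rewrite /A_last /= ifF; last by apply/negbTE; rewrite neq_ltn lt_jn.
by rewrite big_split /= sum_binz_Qdiag_pred ?sum_binz_Qdiag //; lia.
Qed.

Lemma sum_A_last_Splus n k : x * y != 0 ->
  \sum_(j < n.+1) A_last x y n.+1 j * Splus x y j k =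
  iter n (Tplus x y) (delta0 R) k + (x * y) ^+ n * ind_ge R n.+1 k.
Proof.
move=> xy_neq0; rewrite big_ord_recr /= /A_last eqxx /=.
set S1 := \sum_(j < n) (-1) ^+ j * Qdiag x y j n * Splus x y j k.
set S2 := \sum_(j < n) (-1) ^+ j * Qdiag x y j n.+1 * Splus x y j k.
have -> : \sum_(j < n) A_last x y n.+1 j * Splus x y j k = (-1) ^+ n.+1 / (x * y) * (S1 + S2).
  rewrite /S1 /S2 -big_split mulr_sumr; apply: eq_bigr => j _.
  by rewrite /= A_last_Qdiag // exprD; ring.
have E1 : S1 = (-1) ^+ n * gamma x y n k - (-1) ^+ n * Splus x y n k.
  by have := alt_Qdiag_Splus x y n k; rewrite big_ord_recr /= Qdiag_id -/S1 => <-; ring.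
have E2 : S2 = (-1) ^+ n.+1 * gamma x y n.+1 k
    - (-1) ^+ n * (n.+1%:R * (x + y)) * Splus x y n k - (-1) ^+ n.+1 * Splus x y n.+1 k.
  have := alt_Qdiag_Splus x y n.+1 k; rewrite !big_ord_recr /= -/S2 Qdiag_id.
  by rewrite /Qdiag leqnSn subSnn negbin_conv1 => <-; ring.
rewrite E1 E2 gammaS SplusSr !exprS -signr_odd; case: (odd n) => /=; field.
all: by move: xy_neq0; rewrite mulf_eq0 negb_or andbC.
Qed.

End LastRow.

Unset Implicit Arguments.

Theorem lemma9 (R : fieldType) (x y : R) (hxy : x * y != 0) (m n k : nat) :
  (1 <= n)%N -> (m <= n)%N ->
  \sum_(j < n) A_last x y n j *
     (\sum_(0 <= l < (k + m + n).+1) Pplus x y (m + j) k%:Z l%:Z)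
  = Pplus x y (m + n - 1) k%:Z 0
    + (x * y) ^+ (n - 1) *
      (\sum_(0 <= l < (k + m + n).+1) Pn x y m 0 (n%:Z - k%:Z + l%:Z)).
Proof.
case: n => [//|n] _ le_mn.
have -> : (m + n.+1 - 1 = m + n)%N by lia.
rewrite subn1 /= sum_Pn; last by lia.
rewrite -iter_Tplus_ind_ge // Pplus_iter_delta0 iterD.
rewrite (eq_bigr (fun j : 'I_n.+1 => A_last x y n.+1 j * iter m (Tplus x y) (Splus x y j) k)).
  rewrite -(iter_linop_sum (Tplus_ext x y) (Tplus_lin x y)).
  rewrite (iter_linop_ext (Tplus_ext x y) m (g := fun k =>
    1 * iter n (Tplus x y) (delta0 R) k + (x * y) ^+ n * ind_ge R n.+1 k)) => [|k'].
    by rewrite (iter_linop_lin (Tplus_ext x y) (Tplus_lin x y)) mul1r.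
  by rewrite mul1r sum_A_last_Splus.
by move=> j _; rewrite sum_Pplus ?iterD //; have := ltn_ord j; lia.
Qed.
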